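(* Let $G$ be a positively $0$-transitive Lie superalgebra such that $G_+$ is generated by $G_1$. Let $U$ be the universal Lie superalgebra associated to $U_1:=G_1$, let $D_{2+}\subseteq U_{2+}$ be the kernel of the canonical surjective Lie superalgebra morphism $U_+\to G_+$ restricting to the identity on $U_1$, and let $N=\{x\in U:[x,d]\in D_{2+}\text{ for all }d\in D_{2+}\}$ be the idealiser of $D_{2+}$ in $U$. Then there is an injective Lie superalgebra morphism from $G$ into the prolongation $N/D_{2+}$ of $G_+$.
   Context: All vector spaces are over $\mathbb{K}=\mathbb{R}$ or $\mathbb{C}$, $\mathbb{Z}$-graded, parity equal to degree mod 2; morphisms preserve degree. A Lie superalgebra is a graded space with degree-preserving bracket satisfying graded antisymmetry and graded Jacobi. $G_\pm=\bigoplus_{k\ge1}G_{\pm k}$, $G_{0-}=\bigoplus_{k\le0}G_k$, $U_{2+}=\bigoplus_{k\ge2}U_k$. $G$ is positively $0$-transitive if for $x\in G_{0-}$, $[G_+,x]=0$ implies $x=0$. Universal Lie superalgebra: for $U_1$ concentrated in degree 1 (odd), put $U_0=\mathrm{End}(U_1)$, $U_{-p+1}=\mathrm{Hom}(U_1,U_{-p+2})$ for $p\ge2$; on $U_{1-}=\bigoplus_{k\le1}U_k$ define brackets recursively by $[x,u]=x(u)$, $[u,x]=-(-1)^{|x|}x(u)$, $[x,y](u)=[x,y(u)]+(-1)^{|y|}[x(u),y]$ ($x,y\in U_{0-}$, $u\in U_1$), giving a semilocal Lie superalgebra; $U$ is the unique Lie superalgebra extending it such that $U_+$ is the free Lie superalgebra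 generated by $U_1$. *)

From mathcomp Require Import all_boot all_algebra complex.
From mathcomp Require Import reals.

Unset Implicit Arguments.
Unset Printing Implicit Defensive.
Import GRing.Theory Num.Theory.
Local Open Scope ring_scope.

Section GradedLie.
Variable K : fieldType.

Record GLSA := {
  car : lmodType K;
  deg : int -> car -> Prop;
  br  : car -> car -> car
}.

Definition par (i : int) : bool := odd `|i|%N.
Definition ssign (i j : int) : K := (-1) ^+ (par i && par j).

Definition in_degs (V : GLSA) (P : int -> Prop) (x : car V) : Prop :=
  exists (s : seq int) (f : int -> car V),
    (forall k, k \in s -> P k /\ deg V k (f k)) /\ x = \sum_(k <- s) f k.

Definition plus_part (V : GLSA) := in_degs V (fun k => 0 < k).
Definition nonpos_part (V : GLSA) := in_degs V (fun k => k <= 0).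

Definition is_GLSA (V : GLSA) : Prop :=
  (forall k, deg V k 0 /\
     forall (a : K) x y, deg V k x -> deg V k y -> deg V k (a *: x + y)) /\
  (forall x, in_degs V (fun _ => True) x) /\
  (forall (s : seq int) (f : int -> car V), uniq s ->
     (forall k, k \in s -> deg V k (f k)) -> \sum_(k <- s) f k = 0 ->
     forall k, k \in s -> f k = 0) /\
  (forall (a : K) x y z, br V (a *: x + y) z = a *: br V x z + br V y z) /\
  (forall (a : K) x y z, br V z (a *: x + y) = a *: br V z x + br V z y) /\
  (forall i j x y, deg V i x -> deg V j y -> deg V (i + j) (br V x y)) /\
  (forall i j x y, deg V i x -> deg V j y ->
     br V x y = - (ssign i j *: br V y x)) /\
  (forall i j x y z, deg V i x -> deg V j y ->
     br V x (br V y z) = br V (br V x y) z + ssign i j *: br V y (br V x z)).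

Definition pos_0_transitive (G : GLSA) : Prop :=
  forall x, nonpos_part G x -> (forall y, plus_part G y -> br G y x = 0) -> x = 0.

Definition plus_generated_by_deg1 (G : GLSA) : Prop :=
  forall S : car G -> Prop,
    S 0 -> (forall (a : K) x y, S x -> S y -> S (a *: x + y)) ->
    (forall x y, S x -> S y -> S (br G x y)) ->
    (forall x, deg G 1 x -> S x) ->
    forall y, plus_part G y -> S y.

Definition morph_on {V W : GLSA} (S : car V -> Prop) (F : car V -> car W) :=
  (forall (a : K) x y, S x -> S y -> F (a *: x + y) = a *: F x + F y) /\
  (forall k x, S x -> deg V k x -> deg W k (F x)) /\
  (forall x y, S x -> S y -> F (br V x y) = br W (F x) (F y)).

Definition plus_free_on_deg1 (U : GLSA) : Prop :=
  forall (L : GLSA), is_GLSA L ->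
  (forall f : car U -> car L,
     (forall (a : K) u v, deg U 1 u -> deg U 1 v -> f (a *: u + v) = a *: f u + f v) ->
     (forall u, deg U 1 u -> deg L 1 (f u)) ->
     exists F : car U -> car L,
       morph_on (plus_part U) F /\ forall u, deg U 1 u -> F u = f u) /\
  (forall F1 F2 : car U -> car L,
     morph_on (plus_part U) F1 -> morph_on (plus_part U) F2 ->
     (forall u, deg U 1 u -> F1 u = F2 u) ->
     forall x, plus_part U x -> F1 x = F2 x).

(* U is the universal Lie superalgebra associated to U_1 := G_1, the
   identification G_1 ~ U_1 being the linear bijection j. *)
Definition universal_LSA_of (G U : GLSA) (j : car G -> car U) : Prop :=
  is_GLSA U /\
  (forall (a : K) g h, deg G 1 g -> deg G 1 h -> j (a *: g + h) = a *: j g + j h) /\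
  (forall g, deg G 1 g -> deg U 1 (j g)) /\
  (forall g h, deg G 1 g -> deg G 1 h -> j g = j h -> g = h) /\
  (forall u, deg U 1 u -> exists2 g, deg G 1 g & j g = u) /\
  (* U_0 = End(U_1), U_k = Hom(U_1, U_{k+1}) for k <= -1, x(u) = [x,u]:
     x |-> [x, -]|_{U_1} is a linear bijection U_k -> Hom(U_1, U_{k+1}) *)
  (forall k : int, k <= 0 ->
     (forall x, deg U k x -> (forall u, deg U 1 u -> br U x u = 0) -> x = 0) /\
     (forall phi : car U -> car U,
        (forall (a : K) u v, deg U 1 u -> deg U 1 v ->
           phi (a *: u + v) = a *: phi u + phi v) ->
        (forall u, deg U 1 u -> deg U (k + 1) (phi u)) ->
        exists2 x, deg U k x & forall u, deg U 1 u -> br U x u = phi u)) /\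
  plus_free_on_deg1 U.

Definition canonical_proj (G U : GLSA) (j : car G -> car U) (pi : car U -> car G) :=
  morph_on (plus_part U) pi /\ forall g, deg G 1 g -> pi (j g) = g.

Definition Dker {U G : GLSA} (pi : car U -> car G) (x : car U) : Prop :=
  plus_part U x /\ pi x = 0.

Definition idealiser {U : GLSA} (D : car U -> Prop) (x : car U) : Prop :=
  forall d, D d -> D (br U x d).

(* The quotient N/D is represented through representatives:
   psi g in N is a representative of the class of g's image, the class
   of x being x + D; the grading on N/D is (N_k + D)/D. *)
Definition inj_morph_to_quotient (G U : GLSA) (N D : car U -> Prop) : Prop :=
  exists psi : car G -> car U,
    (forall g, N (psi g)) /\
    (forall (a : K) g h, D (psi (a *: g + h) - (a *: psi g + psi h))) /\
    (forall k g, deg G k g -> exists y, [/\ deg U k y, N y & D (psi g - y)]) /\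
    (forall g h, D (psi (br G g h) - br U (psi g) (psi h))) /\
    (forall g, D (psi g) -> g = 0).

Definition prop3p9_statement : Prop :=
  forall (G U : GLSA) (j : car G -> car U) (pi : car U -> car G),
    is_GLSA G -> pos_0_transitive G -> plus_generated_by_deg1 G ->
    universal_LSA_of G U j -> canonical_proj G U j pi ->
    inj_morph_to_quotient G U (idealiser (Dker pi)) (Dker pi).

End GradedLie.

From HB Require Import structures.
From mathcomp Require Import all_boot all_algebra complex.
From mathcomp Require Import reals.
From mathcomp Require Import boolp all_order zify.

(* The map [psi : G -> U] sends a homogeneous [g] of degree [k <= 1] to an
   exact lift: [j g] in degree 1 and, for [k <= 0], the unique [x] in [U_k]
   with [[x, j h] = psi [g, h]] for all [h] in [G_1]; it exists because
   [U_k = Hom(U_1, U_(k+1))].  In degrees [>= 2] it picks a preimage under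
   the surjection [pi : U_+ -> G_+].  Brackets of two lifts of degree [<= 0]
   are then exact (induction on the degree, via Jacobi), and the bracket of
   a lift of degree [<= 0] with [w] in [U_+] lifts [[g, pi w]] (induction
   on the generation of the free algebra [U_+] by [U_1]).  The latter gives
   both the morphism property modulo [D] and that [psi] lands in the
   idealiser, as [pi] kills [D].  Injectivity modulo [D] holds because [D]
   vanishes in degrees [<= 1] and [G] is positively 0-transitive. *)

Set Implicit Arguments.
Unset Strict Implicit.
Unset Printing Implicit Defensive.
Import Order.TTheory GRing.Theory Num.Theory.
Local Open Scope ring_scope.

Lemma big_uniq_supp (M : nmodType) (F : int -> M) (s1 s2 : seq int) :
  uniq s1 -> uniq s2 -> (forall k, k \notin s1 -> F k = 0) ->
  (forall k, k \notin s2 -> F k = 0) ->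
  \sum_(k <- s1) F k = \sum_(k <- s2) F k.
Proof.
move=> u1 u2 h1 h2.
have filterE (s s' : seq int) : (forall k, k \notin s' -> F k = 0) ->
    \sum_(k <- s) F k = \sum_(k <- [seq k <- s | k \in s']) F k.
  move=> h; rewrite big_filter [RHS]big_mkcond /=; apply: eq_bigr => k _.
  by case: ifP => // /negbT /h.
rewrite (filterE s1 s2 h2) (filterE s2 s1 h1); apply: perm_big.
by apply: uniq_perm; rewrite ?filter_uniq // => k; rewrite !mem_filter andbC.
Qed.

Definition choose_or (T : Type) (d : T) (P : T -> Prop) : T :=
  match pselect (exists x, P x) with
  | left h => proj1_sig (cid h)
  | right _ => d end.

Lemma choose_orP (T : Type) (d : T) (P : T -> Prop) :
  (exists x, P x) -> P (choose_or d P).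
Proof. by rewrite /choose_or => h; case: pselect => // h'; case: (cid h'). Qed.

Section GradedSpace.
Variable K : fieldType.
Variable V : GLSA K.
Hypothesis HV : is_GLSA K V.

Local Notation dg := (deg K V).
Local Notation br := (br K V).

Lemma deg0 k : dg k 0.
Proof. by case: HV => h _; case: (h k). Qed.
Lemma degDZ k a x y : dg k x -> dg k y -> dg k (a *: x + y).
Proof. by case: HV => h _; case: (h k) => _; apply. Qed.
Lemma degD k x y : dg k x -> dg k y -> dg k (x + y).
Proof. by move=> hx hy; have := degDZ 1 hx hy; rewrite scale1r. Qed.
Lemma degZ k a x : dg k x -> dg k (a *: x).
Proof. by move=> hx; have := degDZ a hx (deg0 k); rewrite addr0. Qed.
Lemma degN k x : dg k x -> dg k (- x).
Proof. by move=> hx; rewrite -scaleN1r; apply: degZ. Qed.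
Lemma degB k x y : dg k x -> dg k y -> dg k (x - y).
Proof. by move=> hx hy; apply: degD => //; apply: degN. Qed.
Lemma deg_sum k (I : eqType) (r : seq I) (F : I -> car K V) :
  (forall i, i \in r -> dg k (F i)) -> dg k (\sum_(i <- r) F i).
Proof.
elim: r => [|i r IH] h; first by rewrite big_nil; apply: deg0.
rewrite big_cons; apply: degD; first by apply: h; rewrite mem_head.
by apply: IH => i' hi'; apply: h; rewrite in_cons hi' orbT.
Qed.

Lemma in_degsT x : in_degs K V (fun _ => True) x.
Proof. by case: HV => _ [h _]; apply: h. Qed.
Lemma homog_sum_eq0 (s : seq int) (f : int -> car K V) : uniq s ->
  (forall k, k \in s -> dg k (f k)) -> \sum_(k <- s) f k = 0 ->
  forall k, k \in s -> f k = 0.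
Proof. by case: HV => _ [_ [h _]]; apply: h. Qed.
Lemma brDZl a x y z : br (a *: x + y) z = a *: br x z + br y z.
Proof. by case: HV => _ [_ [_ [h _]]]; apply: h. Qed.
Lemma brDZr a x y z : br z (a *: x + y) = a *: br z x + br z y.
Proof. by case: HV => _ [_ [_ [_ [h _]]]]; apply: h. Qed.
Lemma deg_br i j x y : dg i x -> dg j y -> dg (i + j) (br x y).
Proof. by case: HV => _ [_ [_ [_ [_ [h _]]]]]; apply: h. Qed.
Lemma br_antisym i j x y : dg i x -> dg j y -> br x y = - (ssign K i j *: br y x).
Proof. by case: HV => _ [_ [_ [_ [_ [_ [h _]]]]]]; apply: h. Qed.
Lemma br_jacobi i j x y z : dg i x -> dg j y ->
  br x (br y z) = br (br x y) z + ssign K i j *: br y (br x z).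
Proof. by case: HV => _ [_ [_ [_ [_ [_ [_ h]]]]]]; apply: h. Qed.

Lemma br0l z : br 0 z = 0.
Proof.
have := brDZl 1 0 0 z; rewrite !scale1r addr0 => h.
by apply: (addrI (br 0 z)); rewrite addr0 -h.
Qed.
Lemma br0r z : br z 0 = 0.
Proof.
have := brDZr 1 0 0 z; rewrite !scale1r addr0 => h.
by apply: (addrI (br z 0)); rewrite addr0 -h.
Qed.
Lemma brDl x y z : br (x + y) z = br x z + br y z.
Proof. by have := brDZl 1 x y z; rewrite !scale1r. Qed.
Lemma brDr x y z : br z (x + y) = br z x + br z y.
Proof. by have := brDZr 1 x y z; rewrite !scale1r. Qed.
Lemma brNl x z : br (- x) z = - br x z.
Proof. by have := brDZl (-1) x 0 z; rewrite !addr0 br0l addr0 !scaleN1r. Qed.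
Lemma brBl x y z : br (x - y) z = br x z - br y z.
Proof. by rewrite brDl brNl. Qed.
Lemma br_suml (I : Type) (r : seq I) (F : I -> car K V) z :
  br (\sum_(i <- r) F i) z = \sum_(i <- r) br (F i) z.
Proof.
elim: r => [|i r IH]; first by rewrite !big_nil br0l.
by rewrite !big_cons brDl IH.
Qed.
Lemma br_sumr (I : Type) (r : seq I) (F : I -> car K V) z :
  br z (\sum_(i <- r) F i) = \sum_(i <- r) br z (F i).
Proof.
elim: r => [|i r IH]; first by rewrite !big_nil br0r.
by rewrite !big_cons brDr IH.
Qed.

Definition decomposition (P : int -> Prop) x (s : seq int) (f : int -> car K V) :=
  [/\ uniq s, (forall k, k \in s -> P k /\ dg k (f k)),
      (forall k, k \notin s -> f k = 0) & x = \sum_(k <- s) f k].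

Lemma in_degs_decomposition P x : in_degs K V P x -> exists s f, decomposition P x s f.
Proof.
case=> s0 [f0 [hf ->]].
elim: s0 hf => [|i s0 IH] hf.
  by exists [::], (fun _ => 0); split => //; rewrite !big_nil.
have [|s [f [us hs hz ex]]] := IH.
  by move=> k hk; apply: hf; rewrite in_cons hk orbT.
have [Pi di] : P i /\ dg i (f0 i) by apply: hf; rewrite mem_head.
pose g k := if k == i then f0 i else 0.
have sum_g t : uniq t -> i \in t -> \sum_(k <- t) g k = f0 i.
  move=> ut it; rewrite (@big_uniq_supp _ g t [:: i]) //.
  - by rewrite big_cons big_nil /g eqxx addr0.
  - by move=> k; rewrite /g; case: eqP => // ->; rewrite it.
  - by move=> k; rewrite inE /g; case: eqP.
have deg_g k : dg k (g k) by rewrite /g; case: eqP => [->|_]; [exact: di | exact: deg0].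
have hzg k : k \notin i :: s -> f k + g k = 0.
  by rewrite in_cons negb_or => /andP[nki nks]; rewrite hz // /g (negbTE nki) addr0.
exists (undup (i :: s)), (fun k => f k + g k); split.
- exact: undup_uniq.
- move=> k; rewrite mem_undup in_cons; case: (eqVneq k i) => [-> _|nki] /=.
    split => //; apply: degD => //; case: (boolP (i \in s)) => his.
      by case: (hs i his).
    by rewrite hz //; apply: deg0.
  by move=> hk; case: (hs k hk) => Pk dk; split => //; apply: degD.
- by move=> k; rewrite mem_undup; apply: hzg.
- have u : uniq (undup (i :: s)) := undup_uniq _.
  rewrite big_cons ex big_split sum_g ?mem_undup ?mem_head // [RHS]addrC.
  congr (_ + _); apply: big_uniq_supp => // k.
  by rewrite mem_undup in_cons negb_or => /andP[_]; apply: hz.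
Qed.

End GradedSpace.

Section Components.
Variable K : fieldType.
Variable V : GLSA K.
Hypothesis HV : is_GLSA K V.

Local Notation dg := (deg K V).
Local Notation br := (br K V).
Local Notation plus := (plus_part K V).
Local Notation decomp := (@decomposition K V).

Definition hdec (x : car K V) : seq int * (int -> car K V) :=
  choose_or ([::], fun _ => 0) (fun p => decomp (fun _ => True) x p.1 p.2).
Definition hsupp x := (hdec x).1.
Definition hcomp k x := (hdec x).2 k.

Lemma hcompP x : decomp (fun _ => True) x (hsupp x) (fun k => hcomp k x).
Proof.
apply: (@choose_orP _ _ (fun p => decomp (fun _ => True) x p.1 p.2)).
by have [s [f h]] := in_degs_decomposition HV (in_degsT HV x); exists (s, f).
Qed.

Lemma decomposition_uniq P Q x s f t g :
  decomp P x s f -> decomp Q x t g -> forall k, f k = g k.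
Proof.
case=> us hs zs ex [ut ht zt ext] k.
pose u := undup (s ++ t).
have uu : uniq u by apply: undup_uniq.
have notin_u i : i \notin u -> i \notin s /\ i \notin t.
  by rewrite mem_undup mem_cat negb_or => /andP.
have hsum : \sum_(i <- u) (f i - g i) = 0.
  rewrite sumrB (@big_uniq_supp _ f u s) ?(@big_uniq_supp _ g u t) -?ex -?ext ?subrr //.
  - by move=> i /notin_u[_ /zt].
  - by move=> i /notin_u[/zs].
have dg_f i : dg i (f i).
  by case: (boolP (i \in s)) => his; [case: (hs i his) | rewrite zs //; apply: deg0].
have dg_g i : dg i (g i).
  by case: (boolP (i \in t)) => hit; [case: (ht i hit) | rewrite zt //; apply: deg0].
case: (boolP (k \in u)) => ku; last by case/notin_u: ku => /zs -> /zt ->.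
apply/eqP; rewrite -subr_eq0; apply/eqP; apply: (homog_sum_eq0 HV uu _ hsum) => //.
by move=> i _; apply: (degB HV).
Qed.

Lemma hcomp_decomposition P x s f k : decomp P x s f -> hcomp k x = f k.
Proof. by move=> h; apply: (decomposition_uniq (hcompP x) h). Qed.

Lemma hcomp_sum_homog x (s : seq int) (f : int -> car K V) k : uniq s ->
  (forall i, i \in s -> dg i (f i)) -> x = \sum_(i <- s) f i ->
  hcomp k x = if k \in s then f k else 0.
Proof.
move=> us hs ex.
apply: (@hcomp_decomposition (fun _ => True) x s (fun i => if i \in s then f i else 0)).
split => //.
- by move=> i hi; rewrite hi; split => //; apply: hs.
- by move=> i /negbTE ->.
- by rewrite ex; apply: eq_big_seq => i ->.
Qed.

Lemma deg_hcomp k x : dg k (hcomp k x).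
Proof.
case: (hcompP x) => _ hs zs _; case: (boolP (k \in hsupp x)) => hk.
  by case: (hs k hk).
by rewrite zs //; apply: (deg0 HV).
Qed.

Lemma hsupp_uniq x : uniq (hsupp x).
Proof. by case: (hcompP x). Qed.
Lemma hcomp_notin_supp x k : k \notin hsupp x -> hcomp k x = 0.
Proof. by case: (hcompP x) => _ _ h _; apply: h. Qed.
Lemma hcomp_expand x : x = \sum_(k <- hsupp x) hcomp k x.
Proof. by case: (hcompP x). Qed.

Lemma hcomp_homog k x l : dg k x -> hcomp l x = if l == k then x else 0.
Proof.
move=> hx; rewrite (@hcomp_sum_homog x [:: k] (fun _ => x)) //.
- by rewrite inE.
- by move=> i; rewrite inE => /eqP ->.
- by rewrite big_cons big_nil addr0.
Qed.

Lemma hcomp_id k x : dg k x -> hcomp k x = x.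
Proof. by move=> hx; rewrite (hcomp_homog k hx) eqxx. Qed.
Lemma hcomp_eq0 k x l : dg k x -> l != k -> hcomp l x = 0.
Proof. by move=> hx nlk; rewrite (hcomp_homog l hx) (negbTE nlk). Qed.
Lemma hcomp0 k : hcomp k 0 = 0.
Proof. by rewrite (hcomp_homog k (deg0 HV 0)); case: eqP. Qed.

Lemma hcompDZ k a x y : hcomp k (a *: x + y) = a *: hcomp k x + hcomp k y.
Proof.
pose u := undup (hsupp x ++ hsupp y).
have notin_u i : i \notin u -> hcomp i x = 0 /\ hcomp i y = 0.
  by rewrite mem_undup mem_cat negb_or => /andP[/hcomp_notin_supp -> /hcomp_notin_supp ->].
rewrite (@hcomp_sum_homog _ u (fun i => a *: hcomp i x + hcomp i y)) ?undup_uniq //.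
- by case: ifP => // /negbT /notin_u[-> ->]; rewrite scaler0 addr0.
- by move=> i _; apply: (degDZ HV) => //; apply: deg_hcomp.
have over_u z : (forall i, i \notin u -> hcomp i z = 0) -> z = \sum_(i <- u) hcomp i z.
  move=> hz; rewrite {1}[z]hcomp_expand; apply: big_uniq_supp => //.
  - exact: hsupp_uniq.
  - exact: undup_uniq.
  - exact: hcomp_notin_supp.
by rewrite big_split /= -scaler_sumr -!over_u // => i /notin_u[].
Qed.

Lemma hcompD k x y : hcomp k (x + y) = hcomp k x + hcomp k y.
Proof. by have := hcompDZ k 1 x y; rewrite !scale1r. Qed.
Lemma hcomp_sum k (I : Type) (r : seq I) (F : I -> car K V) :
  hcomp k (\sum_(i <- r) F i) = \sum_(i <- r) hcomp k (F i).
Proof.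
elim: r => [|i r IH]; first by rewrite !big_nil hcomp0.
by rewrite !big_cons hcompD IH.
Qed.

Lemma in_degsP (P : int -> Prop) x :
  in_degs K V P x <-> (forall k, ~ P k -> hcomp k x = 0).
Proof.
split.
  move=> /(in_degs_decomposition HV) [s [f h]] k nPk; rewrite (hcomp_decomposition k h).
  by case: h => _ hs zs _; apply: zs; apply/negP => /hs [].
move=> h; exists [seq k <- hsupp x | `[< P k >]], (fun k => hcomp k x); split.
  by move=> k; rewrite mem_filter => /andP [/asboolP Pk _]; split => //; exact: deg_hcomp.
rewrite big_filter [RHS]big_mkcond /= {1}[x]hcomp_expand; apply: eq_bigr => k _.
by case: asboolP => // /h.
Qed.

Lemma plus_partP x : plus x <-> (forall k, k <= 0 -> hcomp k x = 0).
Proof.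
rewrite /plus_part in_degsP; split=> h k hk; apply: h.
- by rewrite ltNge hk.
- by rewrite leNgt; apply/negP.
Qed.

Lemma plus_part0 : plus 0.
Proof. by apply/plus_partP => k _; rewrite hcomp0. Qed.
Lemma plus_partDZ a x y : plus x -> plus y -> plus (a *: x + y).
Proof.
move=> /plus_partP hx /plus_partP hy; apply/plus_partP => k hk.
by rewrite hcompDZ hx ?hy ?scaler0 ?addr0.
Qed.
Lemma plus_partD x y : plus x -> plus y -> plus (x + y).
Proof. by move=> hx hy; have := plus_partDZ 1 hx hy; rewrite scale1r. Qed.
Lemma plus_partB x y : plus x -> plus y -> plus (x - y).
Proof. by move=> hx hy; rewrite -scaleN1r addrC; apply: plus_partDZ. Qed.
Lemma plus_part_sum (I : eqType) (r : seq I) F :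
  (forall i, i \in r -> plus (F i)) -> plus (\sum_(i <- r) F i).
Proof.
elim: r => [|i r IH] h; first by rewrite big_nil; apply: plus_part0.
rewrite big_cons; apply: plus_partD; first by apply: h; rewrite mem_head.
by apply: IH => i' hi'; apply: h; rewrite in_cons hi' orbT.
Qed.
Lemma plus_part_homog k x : 0 < k -> dg k x -> plus x.
Proof.
move=> hk hx; apply/plus_partP => l hl; apply: (hcomp_eq0 hx).
by apply: contraTN hl => /eqP ->; rewrite -ltNge.
Qed.
Lemma plus_part_hcomp k x : plus x -> plus (hcomp k x).
Proof.
move=> px; case: (leP k 0) => hk.
  by rewrite ((plus_partP _).1 px k hk); apply: plus_part0.
exact: plus_part_homog hk (deg_hcomp _ _).
Qed.
Lemma plus_part_deg_le0 k x : plus x -> dg k x -> k <= 0 -> x = 0.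
Proof. by move=> /plus_partP h hx hk; rewrite -(hcomp_id hx); apply: h. Qed.

Lemma hcomp_br m x y :
  hcomp m (br x y) = \sum_(a <- hsupp x) br (hcomp a x) (hcomp (m - a) y).
Proof.
rewrite {1}[x]hcomp_expand (br_suml HV) hcomp_sum; apply: eq_bigr => a _.
rewrite {1}[y]hcomp_expand (br_sumr HV) hcomp_sum.
have deg_m : dg m (br (hcomp a x) (hcomp (m - a) y)).
  by rewrite -{1}(subrKC a m); apply: (deg_br HV); apply: deg_hcomp.
rewrite (@big_uniq_supp _ _ (hsupp y) [:: m - a]) ?hsupp_uniq //.
- by rewrite big_cons big_nil addr0 hcomp_id.
- by move=> k hk; rewrite (hcomp_notin_supp hk) (br0r HV) hcomp0.
- move=> k; rewrite inE => nk; apply: (hcomp_eq0 (k := a + k)).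
    by apply: (deg_br HV); apply: deg_hcomp.
  by apply: contra nk => /eqP ->; rewrite addrC addKr.
Qed.

Lemma plus_part_br x y : plus x -> plus y -> plus (br x y).
Proof.
move=> /plus_partP px /plus_partP py; rewrite [x]hcomp_expand [y]hcomp_expand (br_suml HV).
apply: plus_part_sum => a _; rewrite (br_sumr HV); apply: plus_part_sum => b _.
case: (leP a 0) => ha; first by rewrite px // (br0l HV); apply: plus_part0.
case: (leP b 0) => hb; first by rewrite py // (br0r HV); apply: plus_part0.
by apply: (@plus_part_homog (a + b)); [apply: addr_gt0 | apply: (deg_br HV); apply: deg_hcomp].
Qed.

End Components.

Section GeneratedInduction.
Variable K : fieldType.
Variable V : GLSA K.
Hypothesis HV : is_GLSA K V.
Hypothesis Vgen : plus_generated_by_deg1 K V.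

Local Notation dg := (deg K V).
Local Notation br := (br K V).
Local Notation plus := (plus_part K V).

Variable P : int -> car K V -> Prop.
Hypothesis P0 : forall l, 0 < l -> P l 0.
Hypothesis PDZ : forall l a v w, 0 < l -> dg l v -> dg l w -> P l v -> P l w ->
  P l (a *: v + w).
Hypothesis Pbr : forall a b v w, 0 < a -> 0 < b -> dg a v -> dg b w -> P a v -> P b w ->
  P (a + b) (br v w).
Hypothesis P1 : forall u, dg 1 u -> P 1 u.

Lemma homog_ind_sum l (I : eqType) (r : seq I) F : 0 < l ->
  (forall i, i \in r -> dg l (F i) /\ P l (F i)) -> P l (\sum_(i <- r) F i).
Proof.
move=> hl; elim: r => [|i r IH] h; first by rewrite big_nil; apply: P0.
have [d1 t1] := h i (mem_head _ _).
have h' j : j \in r -> dg l (F j) /\ P l (F j) by move=> hj; apply: h; rewrite in_cons hj orbT.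
rewrite big_cons -[F i]scale1r; apply: PDZ => //; last exact: IH.
by apply: (deg_sum HV) => j /h'[].
Qed.

(* Induct over the subalgebra of elements all of whose components satisfy [P]. *)
Lemma plus_generated_homog_ind l v : 0 < l -> dg l v -> P l v.
Proof.
pose S y := plus y /\ forall l, 0 < l -> P l (hcomp l y).
have HS : forall y, plus y -> S y.
  apply: Vgen.
  - by split; [apply: (plus_part0 HV) | move=> l' hl; rewrite (hcomp0 HV); apply: P0].
  - move=> a x y [px hx] [py hy]; split; first exact: (plus_partDZ HV).
    by move=> l' hl; rewrite (hcompDZ HV); apply: PDZ => //; try apply: (deg_hcomp HV); auto.
  - move=> x y [px hx] [py hy]; split; first exact: (plus_part_br HV).
    move=> l' hl; rewrite (hcomp_br HV); apply: homog_ind_sum => // a _.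
    split; first by rewrite -{1}(subrKC a l'); apply: (deg_br HV); apply: (deg_hcomp HV).
    case: (leP a 0) => ha.
      by rewrite ((plus_partP HV _).1 px a ha) (br0l HV); apply: P0.
    case: (leP (l' - a) 0) => hb.
      by rewrite ((plus_partP HV _).1 py _ hb) (br0r HV); apply: P0.
    by rewrite -{1}(subrKC a l'); apply: Pbr => //; try apply: (deg_hcomp HV); auto.
  - move=> x hx; split; first exact: (plus_part_homog HV ltr01 hx).
    move=> l' hl; rewrite (hcomp_homog HV l' hx).
    by case: eqP => [->|_]; [exact: P1 | exact: P0].
move=> hl hv; have [_ /(_ l hl)] := HS v (plus_part_homog HV hl hv).
by rewrite (hcomp_id HV hv).
Qed.

End GeneratedInduction.

Section SubAlgebra.
Variable K : fieldType.
Variable U : GLSA K.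
Hypothesis HU : is_GLSA K U.
Variable P : car K U -> Prop.
Hypothesis P0 : P 0.
Hypothesis PDZ : forall (a : K) x y, P x -> P y -> P (a *: x + y).
Hypothesis Pbr : forall x y, P x -> P y -> P (br K U x y).
Hypothesis Phcomp : forall k x, P x -> P (hcomp k x).

Definition sub_predb : pred (car K U) := fun x => `[< P x >].

Lemma sub_predb_closed : submod_closed sub_predb.
Proof.
split; first by apply/asboolP.
by move=> a x y /asboolP hx /asboolP hy; apply/asboolP; apply: PDZ.
Qed.

HB.instance Definition _ :=
  GRing.isSubmodClosed.Build K (car K U) sub_predb sub_predb_closed.

Record sub_car := SubCar { sval : car K U; sprop : sub_predb sval }.
HB.instance Definition _ := [isSub for sval].
HB.instance Definition _ := [Choice of sub_car by <:].
HB.instance Definition _ := [SubChoice_isSubLmodule of sub_car by <:].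

Lemma svalDZ (a : K) (x y : sub_car) : sval (a *: x + y) = a *: sval x + sval y.
Proof. by []. Qed.
Lemma sval_sum (I : Type) (r : seq I) (F : I -> sub_car) :
  sval (\sum_(i <- r) F i) = \sum_(i <- r) sval (F i).
Proof.
elim: r => [|i r IH]; first by rewrite !big_nil.
by rewrite !big_cons -IH.
Qed.

Lemma sval_inj : injective sval.
Proof. exact: val_inj. Qed.

Lemma br_sub_proof (x y : sub_car) : sub_predb (br K U (sval x) (sval y)).
Proof. by apply/asboolP; apply: Pbr; apply/asboolP; apply: sprop. Qed.

Lemma hcomp_sub_proof k (w : sub_car) : sub_predb (hcomp k (sval w)).
Proof. by apply/asboolP; apply: Phcomp; apply/asboolP; apply: sprop. Qed.

Definition sub_GLSA : GLSA K :=
  @Build_GLSA K (sub_car : lmodType K) (fun k w => deg K U k (sval w))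
    (fun x y => SubCar (br_sub_proof x y)).

Lemma is_GLSA_sub : is_GLSA K sub_GLSA.
Proof.
split; [|split; [|split; [|split; [|split; [|split; [|split]]]]]] => /=.
- by move=> k; split; [exact: (deg0 HU k) | move=> a x y; exact: (degDZ HU a)].
- move=> w; exists (hsupp (sval w)), (fun k => SubCar (hcomp_sub_proof k w)).
  split; first by move=> k _; split => //=; apply: (deg_hcomp HU).
  by apply: sval_inj; rewrite sval_sum /=; apply: (hcomp_expand HU).
- move=> s f us hs /(congr1 sval); rewrite sval_sum => hsum k hk.
  by apply: sval_inj; apply: (homog_sum_eq0 HU us hs hsum).
- by move=> a x y z; apply: sval_inj; exact: (brDZl HU).
- by move=> a x y z; apply: sval_inj; exact: (brDZr HU).
- by move=> i j x y; apply: (deg_br HU).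
- by move=> i j x y hx hy; apply: sval_inj; exact: (br_antisym HU hx hy).
- by move=> i j x y z hx hy; apply: sval_inj; exact: (br_jacobi HU (sval z) hx hy).
Qed.

End SubAlgebra.

Section FreeGeneration.
Variable K : fieldType.
Variable U : GLSA K.
Hypothesis HU : is_GLSA K U.
Hypothesis Ufree : plus_free_on_deg1 K U.

Local Notation dg := (deg K U).
Local Notation plus := (plus_part K U).

Variable S : car K U -> Prop.
Hypothesis S0 : S 0.
Hypothesis SDZ : forall (a : K) x y, S x -> S y -> S (a *: x + y).
Hypothesis Sbr : forall x y, S x -> S y -> S (br K U x y).
Hypothesis S1 : forall x, dg 1 x -> S x.

Lemma S_sum (I : Type) (r : seq I) F : (forall i, S (F i)) -> S (\sum_(i <- r) F i).
Proof.
move=> h; elim: r => [|i r IH]; first by rewrite big_nil.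
by rewrite big_cons -[F i]scale1r; apply: SDZ.
Qed.

Definition hcomps_in (y : car K U) := plus y /\ forall l, S (hcomp l y).

Lemma hcomps_in0 : hcomps_in 0.
Proof. by split; [apply: (plus_part0 HU) | move=> l; rewrite (hcomp0 HU)]. Qed.

Lemma hcomps_inDZ a x y : hcomps_in x -> hcomps_in y -> hcomps_in (a *: x + y).
Proof.
move=> [px hx] [py hy]; split; first exact: (plus_partDZ HU).
by move=> l; rewrite (hcompDZ HU); apply: SDZ.
Qed.

Lemma hcomps_in_br x y : hcomps_in x -> hcomps_in y -> hcomps_in (br K U x y).
Proof.
move=> [px hx] [py hy]; split; first exact: (plus_part_br HU).
by move=> l; rewrite (hcomp_br HU); apply: S_sum => a; apply: Sbr.
Qed.

Lemma hcomps_in_hcomp k x : hcomps_in x -> hcomps_in (hcomp k x).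
Proof.
move=> [px hx]; split; first exact: (plus_part_hcomp HU).
by move=> l; rewrite (hcomp_homog HU l (deg_hcomp HU k x)); case: eqP.
Qed.

Lemma hcomps_in_deg1 u : dg 1 u -> hcomps_in u.
Proof.
move=> hu; split; first exact: (plus_part_homog HU ltr01 hu).
by move=> l; rewrite (hcomp_homog HU l hu); case: eqP => _; [apply: S1|].
Qed.

(* The subalgebra [hcomps_in] receives a morphism extending [U_1]; its
   composite with the inclusion agrees with the identity on [U_+] by freeness. *)
Lemma plus_part_in_generated y : plus y -> S y.
Proof.
pose L := sub_GLSA hcomps_in0 hcomps_inDZ hcomps_in_br.
have HL : is_GLSA K L := is_GLSA_sub HU hcomps_in0 hcomps_inDZ hcomps_in_br hcomps_in_hcomp.
pose f u : car K L := match pselect (dg 1 u) with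
  | left h => SubCar (asboolT (hcomps_in_deg1 h))
  | right _ => 0 end.
have fE u : dg 1 u -> sval (f u) = u by rewrite /f; case: pselect.
have fDZ a u v : dg 1 u -> dg 1 v -> f (a *: u + v) = a *: f u + f v.
  by move=> hu hv; apply: sval_inj; rewrite svalDZ !fE //; apply: (degDZ HU).
have deg_f u : dg 1 u -> deg K L 1 (f u) by move=> hu; rewrite /= fE.
have [F [[FDZ [Fdeg Fbr]] F1]] := (Ufree HL).1 f fDZ deg_f.
have morph_svalF : morph_on K plus (fun x => sval (F x)).
  by split; [|split] => *; rewrite ?FDZ ?Fbr //; apply: Fdeg.
have morph_id : morph_on K plus id by [].
move=> py; have eF : sval (F y) = y.
  by apply: (Ufree HU).2 morph_svalF morph_id _ _ py => u hu; rewrite F1 // fE.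
have [_ hS] : hcomps_in y by rewrite -eF; apply/asboolP; apply: sprop.
by rewrite [y](hcomp_expand HU); apply: S_sum.
Qed.

End FreeGeneration.

Lemma free_plus_generated (K : fieldType) (U : GLSA K) :
  is_GLSA K U -> plus_free_on_deg1 K U -> plus_generated_by_deg1 K U.
Proof. by move=> HU Ufree S *; apply: (plus_part_in_generated HU Ufree (S := S)). Qed.

Section Embedding.
Variable K : fieldType.
Variables G U : GLSA K.
Variable j : car K G -> car K U.
Variable pi : car K U -> car K G.
Hypothesis HG : is_GLSA K G.
Hypothesis Gtrans : pos_0_transitive K G.
Hypothesis Ggen : plus_generated_by_deg1 K G.
Hypothesis Uuniv : universal_LSA_of K G U j.
Hypothesis Hpi : canonical_proj K G U j pi.

Local Notation dG := (deg K G).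
Local Notation dU := (deg K U).
Local Notation bG := (br K G).
Local Notation bU := (br K U).
Local Notation plusU := (plus_part K U).
Local Notation plusG := (plus_part K G).
Local Notation D := (Dker K pi).

Lemma U_is_GLSA : is_GLSA K U. Proof. by case: Uuniv. Qed.
Local Notation HU := U_is_GLSA.

Lemma jDZ a g h : dG 1 g -> dG 1 h -> j (a *: g + h) = a *: j g + j h.
Proof. by case: Uuniv => _ [h1 _]; apply: h1. Qed.
Lemma deg_j g : dG 1 g -> dU 1 (j g).
Proof. by case: Uuniv => _ [_ [h1 _]]; apply: h1. Qed.
Lemma j_inj g h : dG 1 g -> dG 1 h -> j g = j h -> g = h.
Proof. by case: Uuniv => _ [_ [_ [h1 _]]]; apply: h1. Qed.
Lemma j_surj u : dU 1 u -> exists2 g, dG 1 g & j g = u.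
Proof. by case: Uuniv => _ [_ [_ [_ [h1 _]]]]; apply: h1. Qed.
Lemma br_deg1_inj k x : k <= 0 -> dU k x -> (forall u, dU 1 u -> bU x u = 0) -> x = 0.
Proof. by case: Uuniv => _ [_ [_ [_ [_ [h1 _]]]]] hk; case: (h1 k hk) => h2 _; apply: h2. Qed.
Lemma br_deg1_surj k (phi : car K U -> car K U) : k <= 0 ->
  (forall (a : K) u v, dU 1 u -> dU 1 v -> phi (a *: u + v) = a *: phi u + phi v) ->
  (forall u, dU 1 u -> dU (k + 1) (phi u)) ->
  exists2 x, dU k x & forall u, dU 1 u -> bU x u = phi u.
Proof. by case: Uuniv => _ [_ [_ [_ [_ [h1 _]]]]] hk; case: (h1 k hk) => _ h2; apply: h2. Qed.
Lemma U_free : plus_free_on_deg1 K U.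
Proof. by case: Uuniv => _ [_ [_ [_ [_ [_ h1]]]]]. Qed.

Lemma piDZ a x y : plusU x -> plusU y -> pi (a *: x + y) = a *: pi x + pi y.
Proof. by case: Hpi => [[h1 _] _]; apply: h1. Qed.
Lemma deg_pi k x : plusU x -> dU k x -> dG k (pi x).
Proof. by case: Hpi => [[_ [h1 _]] _]; apply: h1. Qed.
Lemma pi_br x y : plusU x -> plusU y -> pi (bU x y) = bG (pi x) (pi y).
Proof. by case: Hpi => [[_ [_ h1]] _]; apply: h1. Qed.
Lemma pi_j g : dG 1 g -> pi (j g) = g.
Proof. by case: Hpi => _ h1; apply: h1. Qed.

Lemma j0 : j 0 = 0.
Proof.
have := jDZ 1 (deg0 HG 1) (deg0 HG 1); rewrite !scale1r addr0 => h.
by apply: (addrI (j 0)); rewrite addr0 -h.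
Qed.
Lemma pi0 : pi 0 = 0.
Proof.
have := piDZ 1 (plus_part0 HU) (plus_part0 HU); rewrite !scale1r addr0 => h.
by apply: (addrI (pi 0)); rewrite addr0 -h.
Qed.
Lemma piD x y : plusU x -> plusU y -> pi (x + y) = pi x + pi y.
Proof. by move=> hx hy; have := piDZ 1 hx hy; rewrite !scale1r. Qed.
Lemma piB x y : plusU x -> plusU y -> pi (x - y) = pi x - pi y.
Proof.
by move=> hx hy; rewrite -scaleN1r addrC piDZ // scaleN1r addrC.
Qed.
Lemma pi_sum (I : eqType) (r : seq I) F : (forall i, i \in r -> plusU (F i)) ->
  pi (\sum_(i <- r) F i) = \sum_(i <- r) pi (F i).
Proof.
elim: r => [|i r IH] h; first by rewrite !big_nil pi0.
have h' k : k \in r -> plusU (F k) by move=> hk; apply: h; rewrite in_cons hk orbT.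
rewrite !big_cons piD ?IH //; first by apply: h; rewrite mem_head.
exact: (plus_part_sum HU).
Qed.

Lemma pi_hcomp k y : plusU y -> pi (hcomp k y) = hcomp k (pi y).
Proof.
move=> py; have e : pi y = \sum_(l <- hsupp y) pi (hcomp l y).
  by rewrite {1}[y](hcomp_expand HU) pi_sum // => l _; apply: (plus_part_hcomp HU).
rewrite (hcomp_sum_homog HG (s := hsupp y) (f := fun l => pi (hcomp l y))) //.
- by case: ifP => // /negbT hk; rewrite (hcomp_notin_supp HU hk) pi0.
- exact: (hsupp_uniq HU).
- by move=> i _; apply: deg_pi; [apply: (plus_part_hcomp HU) | exact: (deg_hcomp HU)].
Qed.

Lemma D0 : D 0.
Proof. by split; [apply: (plus_part0 HU) | apply: pi0]. Qed.
Lemma DDZ a x y : D x -> D y -> D (a *: x + y).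
Proof.
move=> [px hx] [py hy]; split; first exact: (plus_partDZ HU).
by rewrite piDZ // hx hy scaler0 addr0.
Qed.
Lemma DD x y : D x -> D y -> D (x + y).
Proof. by move=> hx hy; have := DDZ 1 hx hy; rewrite scale1r. Qed.
Lemma DN x : D x -> D (- x).
Proof. by move=> hx; have := DDZ (-1) hx D0; rewrite addr0 scaleN1r. Qed.
Lemma D_trans x y z : D (x - y) -> D (y - z) -> D (x - z).
Proof. by move=> h1 h2; have := DD h1 h2; rewrite addrA subrK. Qed.
Lemma D_sum (I : eqType) (r : seq I) F : (forall i, i \in r -> D (F i)) ->
  D (\sum_(i <- r) F i).
Proof.
elim: r => [|i r IH] h; first by rewrite big_nil; apply: D0.
rewrite big_cons; apply: DD; first by apply: h; rewrite mem_head.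
by apply: IH => k hk; apply: h; rewrite in_cons hk orbT.
Qed.
Lemma D_hcomp k y : D y -> D (hcomp k y).
Proof.
move=> [py hy]; split; first exact: (plus_part_hcomp HU).
by rewrite pi_hcomp // hy (hcomp0 HG).
Qed.
Lemma D_brl x y : plusU x -> D y -> D (bU x y).
Proof.
move=> px [py hy]; split; first exact: (plus_part_br HU).
by rewrite pi_br // hy (br0r HG).
Qed.

Lemma D_deg_le1 k y : dU k y -> k <= 1 -> D y -> y = 0.
Proof.
move=> hy hk [py piy]; case: (leP k 0) => hk0; first exact: (plus_part_deg_le0 HU py hy).
have ek : k = 1 by apply/eqP; rewrite eq_le hk.
move: hy; rewrite ek => /j_surj[g dg eg].
by move: piy; rewrite -eg pi_j // => ->; rewrite j0.
Qed.

Lemma pi_surj g : plusG g -> exists2 y, plusU y & pi y = g.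
Proof.
apply: (@Ggen (fun g => exists2 y, plusU y & pi y = g)).
- by exists 0; [apply: (plus_part0 HU) | apply: pi0].
- move=> a _ _ [x px <-] [y py <-]; exists (a *: x + y); first exact: (plus_partDZ HU).
  by rewrite piDZ.
- move=> _ _ [x px <-] [y py <-]; exists (bU x y); first exact: (plus_part_br HU).
  by rewrite pi_br.
- by move=> h hh; exists (j h); [apply: (plus_part_homog HU _ (deg_j hh)) | apply: pi_j].
Qed.

Lemma pi_surj_homog k g : 0 < k -> dG k g -> exists2 y, dU k y & pi y = g.
Proof.
move=> hk hg; have [y py ey] := pi_surj (plus_part_homog HG hk hg).
exists (hcomp k y); first exact: (deg_hcomp HU).
by rewrite pi_hcomp // ey (hcomp_id HG hg).
Qed.

Definition jinv (u : car K U) : car K G := choose_or 0 (fun g => dG 1 g /\ j g = u).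

Lemma jinvP u : dU 1 u -> dG 1 (jinv u) /\ j (jinv u) = u.
Proof.
move=> hu; apply: (@choose_orP _ _ (fun g => dG 1 g /\ j g = u)).
by have [g hg eg] := j_surj hu; exists g.
Qed.
Lemma jK g : dG 1 g -> jinv (j g) = g.
Proof. by move=> hg; have [h1 h2] := jinvP (deg_j hg); apply: j_inj. Qed.
Lemma jinvDZ a u v : dU 1 u -> dU 1 v -> jinv (a *: u + v) = a *: jinv u + jinv v.
Proof.
move=> hu hv; have [du eu] := jinvP hu; have [dv ev] := jinvP hv.
have [duv euv] := jinvP (degDZ HU a hu hv).
by apply: j_inj => //; [apply: (degDZ HG) | rewrite euv jDZ // eu ev].
Qed.

(* [lift n] lifts [G_(1-n)] to [U_(1-n)]. *)
Fixpoint lift (n : nat) (g : car K G) : car K U :=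
  if n is n'.+1 then
    choose_or 0 (fun x => dU (- n'%:Z) x /\
      forall h, dG 1 h -> bU x (j h) = lift n' (bG g h))
  else j g.

Definition lift_linear n :=
  (forall g, dG (1 - n%:Z) g -> dU (1 - n%:Z) (lift n g)) /\
  (forall a g h, dG (1 - n%:Z) g -> dG (1 - n%:Z) h ->
     lift n (a *: g + h) = a *: lift n g + lift n h).

Lemma lift_succ_exists n g : lift_linear n -> dG (- n%:Z) g ->
  exists x, dU (- n%:Z) x /\ forall h, dG 1 h -> bU x (j h) = lift n (bG g h).
Proof.
move=> [Ld LDZ] hg.
have deg_gh h : dG 1 h -> dG (1 - n%:Z) (bG g h).
  by move=> hh; rewrite addrC; apply: (deg_br HG).
have phiDZ a u v : dU 1 u -> dU 1 v ->
    lift n (bG g (jinv (a *: u + v))) = a *: lift n (bG g (jinv u)) + lift n (bG g (jinv v)).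
  move=> hu hv; have [du _] := jinvP hu; have [dv _] := jinvP hv.
  by rewrite jinvDZ // (brDZr HG) LDZ //; apply: deg_gh.
have deg_phi u : dU 1 u -> dU (- n%:Z + 1) (lift n (bG g (jinv u))).
  by move=> hu; rewrite addrC; apply: Ld; apply: deg_gh; case: (jinvP hu).
have [|x hx ex] := br_deg1_surj _ phiDZ deg_phi; first by rewrite oppr_le0.
by exists x; split => // h hh; rewrite ex ?jK //; apply: deg_j.
Qed.

Lemma lift_succP n g : lift_linear n -> dG (- n%:Z) g ->
  dU (- n%:Z) (lift n.+1 g) /\ forall h, dG 1 h -> bU (lift n.+1 g) (j h) = lift n (bG g h).
Proof.
move=> Ln hg; apply: (@choose_orP _ _ (fun x => dU (- n%:Z) x /\
  forall h, dG 1 h -> bU x (j h) = lift n (bG g h))).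
exact: lift_succ_exists.
Qed.

Lemma lift_is_linear n : lift_linear n.
Proof.
elim: n => [|n Ln].
  by split=> [g|a g h hg hh]; rewrite /= ?subr0; [apply: deg_j | rewrite jDZ].
have e : 1 - (n.+1)%:Z = - n%:Z by lia.
rewrite /lift_linear e; split; first by move=> g /(lift_succP Ln)[].
move=> a g h hg hh; have hgh := degDZ HG a hg hh.
have [d1 b1] := lift_succP Ln hgh; have [d2 b2] := lift_succP Ln hg.
have [d3 b3] := lift_succP Ln hh.
apply/eqP; rewrite -subr_eq0; apply/eqP.
apply: (@br_deg1_inj (- n%:Z)); first by rewrite oppr_le0.
  by apply: (degB HU) => //; apply: (degDZ HU).
move=> u /j_surj[h' dh' <-]; rewrite (brBl HU) (brDZl HU) b1 // b2 // b3 //.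
by rewrite (brDZl HG) Ln.2 ?subrr // -[1 - _]addrC; apply: (deg_br HG).
Qed.

Lemma lift_br n g h : dG (- n%:Z) g -> dG 1 h -> bU (lift n.+1 g) (j h) = lift n (bG g h).
Proof. by move=> hg hh; apply: (lift_succP (lift_is_linear n) hg).2. Qed.

(* The chosen lift of a homogeneous element of degree [k]; for [k > 1] it
   is only determined modulo [D], and the test [g == 0] keeps [rep k 0 = 0]. *)
Definition rep (k : int) (g : car K G) : car K U :=
  if k <= 1 then lift (absz (1 - k)%R) g
  else if g == 0 then 0 else choose_or 0 (fun y => dU k y /\ pi y = g).

Lemma rep_le1 k g : k <= 1 -> rep k g = lift (absz (1 - k)%R) g.
Proof. by rewrite /rep => ->. Qed.

Lemma rep_gt1 k g : 1 < k -> dG k g -> dU k (rep k g) /\ pi (rep k g) = g.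
Proof.
move=> hk hg; rewrite /rep leNgt hk /=.
case: eqP => [->|_]; first by split; [apply: (deg0 HU) | apply: pi0].
apply: (@choose_orP _ _ (fun y => dU k y /\ pi y = g)).
by have [y hy ey] := pi_surj_homog (lt_trans ltr01 hk) hg; exists y.
Qed.

Lemma deg_rep k g : dG k g -> dU k (rep k g).
Proof.
move=> hg; case: (leP k 1) => hk; last by case: (rep_gt1 hk hg).
rewrite rep_le1 //; have e : k = 1 - (absz (1 - k)%R)%:Z by lia.
by have := (lift_is_linear (absz (1 - k)%R)).1 g; rewrite -e; apply.
Qed.

Lemma repDZ k a g h : k <= 1 -> dG k g -> dG k h ->
  rep k (a *: g + h) = a *: rep k g + rep k h.
Proof.
move=> hk; rewrite !rep_le1 //; have e : k = 1 - (absz (1 - k)%R)%:Z by lia.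
by have := (lift_is_linear (absz (1 - k)%R)).2 a g h; rewrite -e; apply.
Qed.

Lemma repBZ k c g h : k <= 1 -> dG k g -> dG k h ->
  rep k (g - c *: h) = rep k g - c *: rep k h.
Proof. by move=> hk hg hh; rewrite addrC -scaleNr repDZ // scaleNr addrC. Qed.

Lemma rep0 k : rep k 0 = 0.
Proof.
case: (leP k 1) => hk; last by rewrite /rep leNgt hk eqxx.
have := repDZ 1 hk (deg0 HG k) (deg0 HG k); rewrite !scale1r addr0 => h.
by apply: (addrI (rep k 0)); rewrite addr0 -h.
Qed.

Lemma rep1 g : rep 1 g = j g.
Proof. by rewrite rep_le1. Qed.

Lemma pi_rep k g : 1 <= k -> dG k g -> pi (rep k g) = g.
Proof.
move=> hk hg; case: (leP k 1) => hk1; last by case: (rep_gt1 hk1 hg).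
have ek : k = 1 by apply/eqP; rewrite eq_le hk hk1.
by move: hg; rewrite ek => hg; rewrite rep1 pi_j.
Qed.

Lemma plus_rep k g : 0 < k -> dG k g -> plusU (rep k g).
Proof. by move=> hk hg; apply: (plus_part_homog HU hk); apply: deg_rep. Qed.

Lemma rep_br_deg1 k g h : k <= 0 -> dG k g -> dG 1 h ->
  bU (rep k g) (j h) = rep (k + 1) (bG g h).
Proof.
move=> hk hg hh; rewrite !rep_le1; try lia.
have -> : absz (1 - k)%R = (absz (1 - (k + 1))%R).+1 by lia.
by rewrite lift_br //; have <- : k = - (absz (1 - (k + 1))%R)%:Z by lia.
Qed.

Lemma D_repDZ k a g h : dG k g -> dG k h ->
  D (rep k (a *: g + h) - (a *: rep k g + rep k h)).
Proof.
move=> hg hh; case: (leP k 1) => hk; first by rewrite repDZ // subrr; apply: D0.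
have hk0 : 0 < k := lt_trans ltr01 hk.
have [_ p1] := rep_gt1 hk (degDZ HG a hg hh).
have [_ p2] := rep_gt1 hk hg; have [_ p3] := rep_gt1 hk hh.
have q1 := plus_rep hk0 (degDZ HG a hg hh).
have q23 : plusU (a *: rep k g + rep k h).
  by apply: (plus_partDZ HU); apply: plus_rep.
split; first exact: (plus_partB HU).
by rewrite piB // piDZ ?p1 ?p2 ?p3 ?subrr //; apply: plus_rep.
Qed.

(* [y] lifts [g] in degree [m]: modulo [D] above degree 1, exactly below. *)
Definition represents (m : int) (g : car K G) (y : car K U) : Prop :=
  if 1 < m then plusU y /\ pi y = g else y = rep m g.

Lemma representsH m g y : 1 < m -> represents m g y <-> plusU y /\ pi y = g.
Proof. by rewrite /represents => ->. Qed.
Lemma representsL m g y : m <= 1 -> represents m g y <-> y = rep m g.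
Proof. by rewrite /represents ltNge => ->. Qed.

Lemma represents0 m : represents m 0 0.
Proof.
case: (leP m 1) => hm; first by apply/representsL; rewrite ?rep0.
by apply/representsH => //; split; [apply: (plus_part0 HU) | apply: pi0].
Qed.

Lemma representsDZ m c g1 g2 y1 y2 : dG m g1 -> dG m g2 ->
  represents m g1 y1 -> represents m g2 y2 -> represents m (c *: g1 + g2) (c *: y1 + y2).
Proof.
move=> h1 h2; case: (leP m 1) => hm.
  move=> /(representsL _ _ hm) -> /(representsL _ _ hm) ->.
  by apply/representsL; rewrite ?repDZ.
move=> /(representsH _ _ hm) [p1 e1] /(representsH _ _ hm) [p2 e2]; apply/representsH => //.
by split; [apply: (plus_partDZ HU) | rewrite piDZ // e1 e2].
Qed.

Lemma representsZ m c g y : dG m g -> represents m g y -> represents m (c *: g) (c *: y).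
Proof.
by move=> hg hr; have := representsDZ c hg (deg0 HG m) hr (represents0 m); rewrite !addr0.
Qed.

Lemma D_represents m g y : dG m g -> represents m g y -> D (rep m g - y).
Proof.
move=> hg; case: (leP m 1) => hm.
  by move=> /(representsL _ _ hm) ->; rewrite subrr; apply: D0.
move=> /(representsH _ _ hm) [py ey]; have [_ p1] := rep_gt1 hm hg.
have q1 := plus_rep (lt_trans ltr01 hm) hg.
by split; [apply: (plus_partB HU) | rewrite piB // p1 ey subrr].
Qed.

Definition br_plus_represents (k : int) := forall x, dG k x -> forall l w, 0 < l -> dU l w ->
  represents (k + l) (bG x (pi w)) (bU (rep k x) w).

Lemma represents_br_plus c g y b w : (c <= 0 -> br_plus_represents c) -> dG c g ->
  represents c g y -> 0 < b -> dU b w -> represents (c + b) (bG g (pi w)) (bU y w).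
Proof.
move=> hD hg hr hb hw; have pw := plus_part_homog HU hb hw.
case: (ltP 1 c) => hc.
  move: hr => /(representsH _ _ hc) [py ey]; apply/representsH; first by lia.
  by split; [apply: (plus_part_br HU) | rewrite pi_br // ey].
move: hr => /(representsL _ _ hc) ->; case: (leP c 0) => hc0; first exact: hD.
have ec : c = 1 by lia.
move: hg; rewrite ec rep1 => hg; apply/representsH; first by lia.
have pj := plus_part_homog HU ltr01 (deg_j hg).
by split; [apply: (plus_part_br HU) | rewrite pi_br // pi_j].
Qed.

Lemma represents_br_jacobi k x a b v w :
  (forall c, k < c -> c <= 0 -> br_plus_represents c) -> dG k x ->
  0 < a -> 0 < b -> dU a v -> dU b w ->
  represents (k + a) (bG x (pi v)) (bU (rep k x) v) ->
  represents (k + b) (bG x (pi w)) (bU (rep k x) w) ->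
  represents (k + (a + b)) (bG x (pi (bU v w))) (bU (rep k x) (bU v w)).
Proof.
move=> IH hx ha hb hv hw Tv Tw.
have pv := plus_part_homog HU ha hv; have pw := plus_part_homog HU hb hw.
have dv := deg_pi pv hv; have dw := deg_pi pw hw; have dx := deg_rep hx.
have IH' c : c = k + a \/ c = k + b -> c <= 0 -> br_plus_represents c.
  by move=> hc; apply: IH; lia.
have T1 : represents (k + a + b) (bG (bG x (pi v)) (pi w)) (bU (bU (rep k x) v) w).
  apply: represents_br_plus => //; last exact: (deg_br HG).
  by apply: IH'; left.
have T2 : represents (k + b + a) (bG (bG x (pi w)) (pi v)) (bU (bU (rep k x) w) v).
  apply: represents_br_plus => //; last exact: (deg_br HG).
  by apply: IH'; right.
rewrite pi_br // (br_jacobi HU w dx hv) (br_jacobi HG (pi w) hx dv).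
rewrite (br_antisym HU hv (deg_br HU dx hw)) (br_antisym HG dv (deg_br HG hx dw)).
rewrite -addrA in T1; rewrite -addrA [b + a]addrC in T2.
rewrite -!scaleNr !scalerA [X in represents _ X _]addrC [X in represents _ _ X]addrC.
apply: representsDZ => //.
  by rewrite [a + b]addrC addrA; apply: (deg_br HG) => //; apply: (deg_br HG).
by rewrite addrA; apply: (deg_br HG) => //; apply: (deg_br HG).
Qed.

Lemma br_plus_representsP k : k <= 0 -> br_plus_represents k.
Proof.
have Hn n : br_plus_represents (- n%:Z).
  elim/ltn_ind: n => n IH x hx.
  have IHc c : - n%:Z < c -> c <= 0 -> br_plus_represents c.
    move=> h1 h2; have -> : c = - (absz c)%:Z by lia.
    by apply: IH; lia.
  apply: (plus_generated_homog_ind HU (free_plus_generated HU U_free)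
    (P := fun l w => represents (- n%:Z + l) (bG x (pi w)) (bU (rep (- n%:Z) x) w))).
  - by move=> l _; rewrite pi0 (br0r HG) (br0r HU); apply: represents0.
  - move=> l a v w hl hv hw Tv Tw.
    have pv := plus_part_homog HU hl hv; have pw := plus_part_homog HU hl hw.
    rewrite piDZ // (brDZr HG) (brDZr HU); apply: representsDZ => //;
      by apply: (deg_br HG) => //; apply: deg_pi.
  - by move=> a b v w ha hb hv hw; apply: represents_br_jacobi.
  - move=> u /j_surj[h dh <-].
    by rewrite pi_j // rep_br_deg1 ?oppr_le0 //; apply/representsL => //; lia.
move=> hk; have -> : k = - (absz k)%:Z by lia.
exact: Hn.
Qed.

Lemma rep_br_le0_step n :
  (forall a b x z, a <= 0 -> b <= 0 -> a + b = 1 - n%:Z -> dG a x -> dG b z ->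
     bU (rep a x) (rep b z) = rep (a + b) (bG x z)) ->
  forall a b x z, a <= 0 -> b <= 0 -> a + b = - n%:Z -> dG a x -> dG b z ->
     bU (rep a x) (rep b z) = rep (a + b) (bG x z).
Proof.
move=> IH.
have IH1 a c x z : a <= 0 -> c <= 1 -> a + c = 1 - n%:Z -> dG a x -> dG c z ->
    bU (rep a x) (rep c z) = rep (a + c) (bG x z).
  move=> ha hc hac hx hz; case: (leP c 0) => hc0; first exact: IH.
  have ec : c = 1 by lia.
  by move: hz; rewrite ec rep1 => hz; rewrite rep_br_deg1.
move=> a b x z ha hb hab hx hz.
have dx := deg_rep hx; have dz := deg_rep hz; have dxz := deg_br HG hx hz.
apply/eqP; rewrite -subr_eq0; apply/eqP.
apply: (@br_deg1_inj (a + b)); first by lia.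
  by apply: (degB HU); [apply: (deg_br HU) | apply: deg_rep].
move=> u /j_surj[h dh <-].
have dzh : dG (b + 1) (bG z h) by apply: (deg_br HG).
have dxh : dG (a + 1) (bG x h) by apply: (deg_br HG).
have JU := br_jacobi HU (j h) dx dz; have JG := br_jacobi HG h hx hz.
rewrite (brBl HU) (canRL (addrK _) (esym JU)) (rep_br_deg1 hb hz dh) (rep_br_deg1 ha hx dh).
rewrite (rep_br_deg1 _ dxz dh) ?(canRL (addrK _) (esym JG)); last by lia.
rewrite (IH1 a (b + 1)) ?(IH1 b (a + 1)) //; try lia.
have -> : a + (b + 1) = a + b + 1 by lia.
have -> : b + (a + 1) = a + b + 1 by lia.
rewrite repBZ ?subrr //; first by lia.
- by rewrite -addrA; apply: (deg_br HG).
- have -> : a + b + 1 = b + (a + 1) by lia.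
  exact: (deg_br HG).
Qed.

Lemma rep_br_le0 a b x z : a <= 0 -> b <= 0 -> dG a x -> dG b z ->
  bU (rep a x) (rep b z) = rep (a + b) (bG x z).
Proof.
have Hn n a' b' x' z' : a' <= 0 -> b' <= 0 -> a' + b' = - n%:Z -> dG a' x' -> dG b' z' ->
    bU (rep a' x') (rep b' z') = rep (a' + b') (bG x' z').
  elim: n a' b' x' z' => [|n IH]; apply: rep_br_le0_step => *; first by lia.
  by apply: IH => //; lia.
by move=> ha hb; apply: (Hn (absz (- (a + b)))) => //; lia.
Qed.

Lemma represents_rep_br a b x z : dG a x -> dG b z ->
  represents (a + b) (bG x z) (bU (rep a x) (rep b z)).
Proof.
move=> hx hz; case: (leP a 0) => ha; case: (leP b 0) => hb.
- by apply/representsL; [lia | rewrite rep_br_le0].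
- by have := br_plus_representsP ha hx hb (deg_rep hz); rewrite pi_rep //; lia.
- have h1a : 1 <= a by lia.
  have := br_plus_representsP hb hz ha (deg_rep hx); rewrite (pi_rep h1a hx).
  rewrite (br_antisym HU (deg_rep hx) (deg_rep hz)) (br_antisym HG hx hz) addrC -!scaleNr.
  by apply: representsZ; rewrite addrC; apply: (deg_br HG).
- apply/representsH; first by lia.
  have p1 := plus_rep ha hx; have p2 := plus_rep hb hz.
  by split; [apply: (plus_part_br HU) | rewrite pi_br // !pi_rep //; lia].
Qed.

Lemma D_rep_br a b x z : dG a x -> dG b z ->
  D (rep (a + b) (bG x z) - bU (rep a x) (rep b z)).
Proof.
by move=> hx hz; apply: D_represents; [apply: (deg_br HG) | apply: represents_rep_br].
Qed.

(* For [d] in [D] the bracket [[rep k x, d]] lifts [[x, pi d] = 0]. *)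
Lemma idealiser_rep k x : dG k x -> idealiser K D (rep k x).
Proof.
move=> hx d hd; case: (ltP 0 k) => hk; first by apply: D_brl => //; apply: plus_rep.
have [pd pid] := hd.
rewrite [d](hcomp_expand HU) (br_sumr HU); apply: D_sum => l _.
case: (leP l 0) => hl.
  by rewrite ((plus_partP HU _).1 pd l hl) (br0r HU); apply: D0.
have := br_plus_representsP hk hx hl (deg_hcomp HU l d).
rewrite pi_hcomp // pid (hcomp0 HG) (br0r HG) => /(D_represents (deg0 HG _)).
by rewrite rep0 sub0r => /DN; rewrite opprK.
Qed.

Lemma br_deg1_eq0 k y : k <= 0 -> dG k y -> (forall h, dG 1 h -> bG y h = 0) -> y = 0.
Proof.
move=> hk hy hyh; apply: Gtrans.
  by apply/(in_degsP HG) => l hl; apply: (hcomp_eq0 HG hy); apply: contra_not_neq hl => ->.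
have Hplus l v : 0 < l -> dG l v -> bG v y = 0.
  apply: (plus_generated_homog_ind HG Ggen (P := fun l v => bG v y = 0)).
  - by move=> l' _; apply: (br0l HG).
  - by move=> l' a v' w _ _ _ tv tw; rewrite (brDZl HG) tv tw scaler0 addr0.
  - move=> a b v' w _ _ hv hw tv tw.
    by have := br_jacobi HG y hv hw; rewrite tw tv !(br0r HG) scaler0 addr0.
  - by move=> u hu; rewrite (br_antisym HG hu hy) hyh // scaler0 oppr0.
move=> w pw; rewrite [w](hcomp_expand HG) (br_suml HG); apply: big1_seq => l _.
case: (leP l 0) => hl; first by rewrite ((plus_partP HG _).1 pw l hl) (br0l HG).
by apply: (Hplus l) => //; apply: (deg_hcomp HG).
Qed.

Lemma rep_inj_le0 k x : k <= 0 -> dG k x -> rep k x = 0 -> x = 0.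
Proof.
have Hn n y : dG (- n%:Z) y -> rep (- n%:Z) y = 0 -> y = 0.
  elim: n y => [|n IH] y hy h0; apply: (br_deg1_eq0 _ hy) => [|h hh]; rewrite ?oppr_le0 //.
    have : rep (- 0%:Z + 1) (bG y h) = 0 by rewrite -rep_br_deg1 // h0 (br0l HU).
    rewrite oppr0 add0r rep1 -j0 => /j_inj; apply => //; last exact: (deg0 HG).
    by have := deg_br HG hy hh; rewrite oppr0 add0r.
  have e : - (n.+1)%:Z + 1 = - n%:Z by lia.
  have : rep (- (n.+1)%:Z + 1) (bG y h) = 0 by rewrite -rep_br_deg1 ?oppr_le0 // h0 (br0l HU).
  by rewrite e => /IH; apply; rewrite -e; apply: (deg_br HG).
move=> hk; have -> : k = - (absz k)%:Z by lia.
exact: Hn.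
Qed.

Definition psi (g : car K G) : car K U := \sum_(k <- hsupp g) rep k (hcomp k g).

Lemma psi_over g s : uniq s -> (forall k, k \notin s -> hcomp k g = 0) ->
  psi g = \sum_(k <- s) rep k (hcomp k g).
Proof.
move=> us hs; apply: big_uniq_supp => //; first exact: (hsupp_uniq HG).
- by move=> k hk; rewrite (hcomp_notin_supp HG hk) rep0.
- by move=> k hk; rewrite hs // rep0.
Qed.

Lemma psi_homog k g : dG k g -> psi g = rep k g.
Proof.
move=> hg; rewrite (@psi_over g [:: k]) //; last first.
  by move=> l; rewrite inE; apply: (hcomp_eq0 HG hg).
by rewrite big_cons big_nil addr0 (hcomp_id HG hg).
Qed.

Lemma D_psiDZ a g h : D (psi (a *: g + h) - (a *: psi g + psi h)).
Proof.
pose s := undup (hsupp g ++ hsupp h ++ hsupp (a *: g + h)).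
have us : uniq s := undup_uniq _.
have notin_s x k : x \in [:: g; h; a *: g + h] -> k \notin s -> hcomp k x = 0.
  rewrite !inE mem_undup !mem_cat !negb_or.
  by case/or3P => /eqP -> /and3P[*]; apply: (hcomp_notin_supp HG).
rewrite !(@psi_over _ s) // => [|k|k|k]; try by apply: notin_s; rewrite !inE eqxx ?orbT.
rewrite scaler_sumr -big_split -sumrB /=; apply: D_sum => k _.
by rewrite (hcompDZ HG); apply: D_repDZ; apply: (deg_hcomp HG).
Qed.

Lemma D_psi_sum (I : eqType) (r : seq I) F :
  D (psi (\sum_(i <- r) F i) - \sum_(i <- r) psi (F i)).
Proof.
elim: r => [|i r IH]; first by rewrite !big_nil (psi_homog (deg0 HG 0)) rep0 subrr; apply: D0.
rewrite !big_cons; have := D_psiDZ 1 (F i) (\sum_(i <- r) F i).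
rewrite !scale1r => /D_trans; apply.
by rewrite opprD addrACA subrr add0r.
Qed.

Lemma D_psi_br g h : D (psi (bG g h) - bU (psi g) (psi h)).
Proof.
have eG : bG g h = \sum_(a <- hsupp g) \sum_(b <- hsupp h) bG (hcomp a g) (hcomp b h).
  rewrite {1}[g](hcomp_expand HG) {1}[h](hcomp_expand HG) (br_suml HG).
  by apply: eq_bigr => a _; rewrite (br_sumr HG).
have eU : bU (psi g) (psi h) =
    \sum_(a <- hsupp g) \sum_(b <- hsupp h) bU (rep a (hcomp a g)) (rep b (hcomp b h)).
  by rewrite /psi (br_suml HU); apply: eq_bigr => a _; rewrite (br_sumr HU).
rewrite eG eU; apply: (D_trans (D_psi_sum _ _)).
apply: (@D_trans _ (\sum_(a <- hsupp g) \sum_(b <- hsupp h) psi (bG (hcomp a g) (hcomp b h)))).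
  by rewrite -sumrB; apply: D_sum => a _; apply: D_psi_sum.
rewrite -sumrB; apply: D_sum => a _; rewrite -sumrB; apply: D_sum => b _.
have da := deg_hcomp HG a g; have db := deg_hcomp HG b h.
by rewrite (psi_homog (deg_br HG da db)); apply: D_rep_br.
Qed.

Lemma idealiser_psi g : idealiser K D (psi g).
Proof.
move=> d hd; rewrite /psi (br_suml HU); apply: D_sum => k _.
by apply: idealiser_rep => //; apply: (deg_hcomp HG).
Qed.

Lemma psi_homog_rep k g : dG k g ->
  exists y, [/\ dU k y, idealiser K D y & D (psi g - y)].
Proof.
move=> hg; exists (rep k g); split; [exact: deg_rep | exact: idealiser_rep |].
by rewrite (psi_homog hg) subrr; apply: D0.
Qed.

(* The degree-[k] component of [psi g] is [rep k (hcomp k g)]; if it lies in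
   [D], it is killed by [pi] when [k >= 1] and vanishes when [k <= 1]. *)
Lemma psi_injD g : D (psi g) -> g = 0.
Proof.
move=> hD; rewrite [g](hcomp_expand HG) big1_seq // => k /andP[_ hk].
have dk := deg_hcomp HG k g.
have Dk : D (rep k (hcomp k g)).
  have := D_hcomp k hD.
  rewrite (hcomp_sum_homog HU (s := hsupp g) (f := fun k => rep k (hcomp k g))) ?hk //.
  - exact: (hsupp_uniq HG).
  - by move=> i _; apply/deg_rep/(deg_hcomp HG).
case: (leP 1 k) => h1; first by case: Dk => _; rewrite (pi_rep h1 dk).
apply: (rep_inj_le0 _ dk); first by lia.
by apply: (D_deg_le1 (deg_rep dk)) => //; lia.
Qed.

Lemma psi_inj_morph : inj_morph_to_quotient K G U (idealiser K D) D.
Proof.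
exists psi; split; first exact: idealiser_psi.
split; first exact: D_psiDZ.
split; first exact: psi_homog_rep.
by split; [exact: D_psi_br | exact: psi_injD].
Qed.

End Embedding.

Lemma prop3p9_statement_field (K : fieldType) : prop3p9_statement K.
Proof.
by move=> G U j pi HG Gtrans Ggen Uuniv Hpi; exact: (psi_inj_morph HG Gtrans Ggen Uuniv Hpi).
Qed.

Theorem proposition3p9 :
  forall R : realType,
    prop3p9_statement (R : fieldType) /\ prop3p9_statement (R[i] : fieldType).
Proof. by move=> R; split; apply: prop3p9_statement_field. Qed.
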